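(* In the setting described in the context, let $\langle s_m, s_{m+1},\ldots,s_{m+L}\rangle$ be a state subsequence, each state constituting one generation $G_1,\ldots,G_L$ of reproducing entities, where (reproduction being without epigenetic development) the size $|G_i|$ of a generation is obtained by enumerating the reproduction instances $(p,c)$ with $p\in E_s$, $c\in E_{s+1}$, $(p,c)\in C$, $(p,c)\in\Delta$ and no $e''\in E_s$ with $(e'',c)\in R$. Given the sets of entities in each state, the worst-case number of steps (RAM model) to observe fecundity, i.e. to compute these generation sizes and decide whether for every $i<L$ there is $j>i$ with $|G_j|\ge|G_i|$, is $O\!\left(L2^{2n}\max\{t_c,\ t_\Delta,\ t_{\delta_{mut}},\ L/2^{2n}\}\right)$.
   Context: A run is a sequence of states, each a finite multiset of atomic elements of size $O(n)$. For each state $s$ an observer has fixed a finite set $E_s$ of entities, each a sub-multiset of $s$, tagged so that distinct entities are distinguishable (entities of different states are distinct objects); hence $|E_s|\le 2^n$. Let $E_T$ be the disjoint union of all $E_s$. The observer fixes: a recognition relation $R\subseteq E_T\times E_T$, a partial injective function with $(e,e')\in R$ only if $e\in E_s$, $e'\in E_{s+1}$ for some state $s$ ($s+1$ denoting the next state); a causal relation $C\subseteq E_T\times E_T$ with $(e,e')\in C$ only if $e\in E_s$, $e'\in E_{s+1}$; and a relation $\Delta\subseteq E_T\times E_T$ such that $(e,e')\in\Delta$ implies $e$ lies in an earlier state than $e'$ and $(e,e')\notin R$. Deciding membership of a given pair in $C$, $\Delta$, $R$ takes at most $t_c$, $t_\Delta$, $t_{\delta_{mut}}$ steps respectively. *)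

From mathcomp Require Import all_boot.
Set Implicit Arguments. Unset Strict Implicit. Unset Printing Implicit Defensive.

(* Setting.  The state subsequence <s_m, ..., s_{m+L}> is indexed by   *)
(* k = 0..L (k stands for s_{m+k}); [E k] lists the entities of the    *)
(* k-th state.  The observer's relations C (causal), Dl (Delta) and R  *)
(* (recognition) are given as boolean oracles on entities.             *)
(* Generation G_i (i = 1..L) consists of the reproduction instances    *)
(* (p,c) with p in E (i-1), c in E i.                                  *)

Section Spec.
Variables (Ent : eqType) (E : nat -> seq Ent) (C Dl R : Ent -> Ent -> bool).

Definition repro_instance (Es : seq Ent) (p c : Ent) : bool :=
  [&& C p c, Dl p c & ~~ has (fun e => R e c) Es].

Definition gen_size (i : nat) : nat :=
  count (fun pc : Ent * Ent => repro_instance (E i.-1) pc.1 pc.2)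
        [seq (p, c) | p <- E i.-1, c <- E i].

Definition fecund (g : nat -> nat) (L : nat) : Prop :=
  forall i, 1 <= i < L -> exists j, i < j <= L /\ g i <= g j.
End Spec.

(* The observation algorithm, with explicit RAM step accounting.       *)
(* Every function returns (result, number of steps).  A query of the  *)
(* oracle C (resp. Dl, R) costs tc (resp. tD, tR) steps; every other   *)
(* elementary operation (loop iteration, test, addition, comparison)  *)
(* costs 1 step.  Loops are executed to completion (worst case).       *)

Section Algo.
Variables (Ent : eqType) (C Dl R : Ent -> Ent -> bool) (tc tD tR : nat).

Fixpoint has_R_pred (Es : seq Ent) (c : Ent) : bool * nat :=
  match Es with
  | [::] => (false, 1)
  | e :: Es' => let: (b, k) := has_R_pred Es' c in (R e c || b, k + tR + 1)
  end.

Fixpoint count_parents (Es : seq Ent) (c : Ent) : nat * nat :=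
  match Es with
  | [::] => (0, 1)
  | p :: Es' =>
      let: (m, k) := count_parents Es' c in
      ((C p c && Dl p c) + m, k + tc + tD + 2)
  end.

Fixpoint gen_size_alg (Es Es' : seq Ent) : nat * nat :=
  match Es' with
  | [::] => (0, 1)
  | c :: Es'' =>
      let: (m, k) := gen_size_alg Es Es'' in
      let: (hr, k1) := has_R_pred Es c in
      let: (cp, k2) := count_parents Es c in
      ((if hr then 0 else cp) + m, k + k1 + k2 + 2)
  end.

Fixpoint gen_sizes_alg (E : nat -> seq Ent) (i l : nat) : seq nat * nat :=
  match l with
  | 0 => ([::], 1)
  | l'.+1 =>
      let: (g, k) := gen_size_alg (E i.-1) (E i) in
      let: (gs, k') := gen_sizes_alg E i.+1 l' in
      (g :: gs, k + k' + 1)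
  end.

Fixpoint exists_ge (x : nat) (s : seq nat) : bool * nat :=
  match s with
  | [::] => (false, 1)
  | y :: s' => let: (b, k) := exists_ge x s' in ((x <= y) || b, k + 2)
  end.

Fixpoint fecund_alg (s : seq nat) : bool * nat :=
  match s with
  | [::] => (true, 1)
  | [:: _] => (true, 1)
  | x :: s' =>
      let: (b1, k1) := exists_ge x s' in
      let: (b2, k2) := fecund_alg s' in
      (b1 && b2, k1 + k2 + 2)
  end.

Definition observe_fecundity (E : nat -> seq Ent) (L : nat)
    : (seq nat * bool) * nat :=
  let: (gs, k1) := gen_sizes_alg E 1 L in
  let: (b, k2) := fecund_alg gs in
  ((gs, b), k1 + k2 + 1).
End Algo.

From mathcomp Require Import all_boot zify.
Set Implicit Arguments. Unset Strict Implicit. Unset Printing Implicit Defensive.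

(* Every loop of the algorithm runs to completion, so its value and its step
   count have closed forms: the generation between two states of at most
   2^n entities costs O(2^(2n) max(tc, tD, tR)) steps, L of them cost
   O(L 2^(2n) max(tc, tD, tR)), and the quadratic scan for fecundity over the
   L sizes costs O(L^2).  Correctness of the values is a reindexing of the
   count of reproduction instances by their child. *)

Lemma count_allpairs_sumn (S T : Type) (P : S -> T -> bool) s t :
  count (fun pc => P pc.1 pc.2) [seq (p, c) | p <- s, c <- t] =
  sumn [seq count (P^~ c) s | c <- t].
Proof.
rewrite -sum1_count big_mkcond big_allpairs exchange_big sumnE big_map /=.
by apply: eq_bigr => c _; rewrite -sum1_count [RHS]big_mkcond.
Qed.

Section GenerationSize.
Variables (Ent : eqType) (C Dl R : Ent -> Ent -> bool) (tc tD tR : nat).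

Lemma has_R_predE Es c :
  has_R_pred R tR Es c = (has (R^~ c) Es, size Es * tR.+1 + 1).
Proof. by elim: Es => //= e Es ->; congr pair; lia. Qed.

Lemma count_parentsE Es c :
  count_parents C Dl tc tD Es c =
  (count (fun p => C p c && Dl p c) Es, size Es * (tc + tD + 2) + 1).
Proof. by elim: Es => //= e Es ->; congr pair; lia. Qed.

Lemma gen_size_algE Es Es' :
  gen_size_alg C Dl R tc tD tR Es Es' =
  (sumn [seq if has (R^~ c) Es then 0 else count (fun p => C p c && Dl p c) Es
        | c <- Es'],
   size Es' * (size Es * (tc + tD + tR + 3) + 4) + 1).
Proof.
by elim: Es' => //= c Es' ->; rewrite has_R_predE count_parentsE; congr pair; lia.
Qed.

Lemma count_repro_instance Es c :
  count (repro_instance C Dl R Es ^~ c) Es =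
  if has (R^~ c) Es then 0 else count (fun p => C p c && Dl p c) Es.
Proof.
rewrite /repro_instance; case: has; last by apply: eq_count => p; rewrite andbT.
by apply/eqP; rewrite -leqn0 leqNgt -has_count; apply/hasPn => p _; rewrite !andbF.
Qed.

Lemma gen_size_alg_value E i :
  (gen_size_alg C Dl R tc tD tR (E i.-1) (E i)).1 = gen_size E C Dl R i.
Proof.
rewrite gen_size_algE /gen_size (count_allpairs_sumn (repro_instance C Dl R _)).
by congr sumn; apply: eq_map => c; rewrite count_repro_instance.
Qed.

Lemma gen_size_alg_cost_le N T Es Es' :
  0 < N -> 0 < T -> size Es <= N -> size Es' <= N -> maxn tc (maxn tD tR) <= T ->
  (gen_size_alg C Dl R tc tD tR Es Es').2 <= 11 * (N * N * T).
Proof.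
move=> N_gt0 T_gt0 sEs sEs' tT; rewrite gen_size_algE /=.
have inner : size Es * (tc + tD + tR + 3) + 4 <= N * (6 * T) + 4.
  by rewrite leq_add2r; apply: leq_mul => //; lia.
have NNT_gt0 : 0 < N * N * T by rewrite !muln_gt0 N_gt0 T_gt0.
have := leq_mul sEs' inner; nia.
Qed.

Lemma gen_sizes_alg_value E i l :
  (gen_sizes_alg C Dl R tc tD tR E i l).1 =
  [seq gen_size E C Dl R k | k <- iota i l].
Proof.
elim: l i => //= l IH i.
case: gen_size_alg (gen_size_alg_value E i) => g k /= <-.
by case: gen_sizes_alg (IH i.+1) => gs k' /= <-.
Qed.

Lemma gen_sizes_alg_cost_le E i l B :
  (forall k, i <= k < i + l -> (gen_size_alg C Dl R tc tD tR (E k.-1) (E k)).2 <= B) ->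
  (gen_sizes_alg C Dl R tc tD tR E i l).2 <= l * B.+1 + 1.
Proof.
elim: l i => //= l IH i costB.
have costBi := costB i; have := IH i.+1 (fun k Hk => costB k ltac:(lia)).
case: gen_size_alg costBi => g k /=; case: gen_sizes_alg => gs k' /= costBi IHcost.
have := costBi ltac:(lia); lia.
Qed.

End GenerationSize.

Definition fecund_seq (s : seq nat) : Prop :=
  forall i, i.+1 < size s -> exists2 j, i < j < size s & nth 0 s i <= nth 0 s j.

Lemma fecund_seq_cons2 x y s :
  fecund_seq [:: x, y & s] <-> has (leq x) (y :: s) /\ fecund_seq (y :: s).
Proof.
split.
- move=> fec; split.
  + have [[|j] lt_j x_le] := fec 0 isT; first by [].
    by apply/hasP; exists (nth 0 (y :: s) j) => //; apply: mem_nth.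
  + move=> i lt_i; have [[|j] lt_j le_ij] := fec i.+1 lt_i; first by [].
    by exists j.
- move=> [/hasP[z z_in x_le_z] fec] [|i] lt_i.
  + exists (index z (y :: s)).+1; last by rewrite /= nth_index.
    by have := index_mem z (y :: s); rewrite z_in.
  + by have [j lt_j le_ij] := fec i lt_i; exists j.+1.
Qed.

Lemma exists_geE x s : exists_ge x s = (has (leq x) s, 2 * size s + 1).
Proof. by elim: s => //= y s ->; congr pair; lia. Qed.

Lemma fecund_alg_cons2 x y s :
  fecund_alg [:: x, y & s] =
  let: (b1, k1) := exists_ge x (y :: s) in
  let: (b2, k2) := fecund_alg (y :: s) in (b1 && b2, k1 + k2 + 2).
Proof. by []. Qed.

Lemma fecund_algP s : reflect (fecund_seq s) (fecund_alg s).1.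
Proof.
elim: s => [|x [|y s] IH]; try by apply: ReflectT => -[|i].
rewrite fecund_alg_cons2 exists_geE; case: fecund_alg IH => b k /= IH.
apply: (iffP andP) => [[x_le /IH fec] | /fecund_seq_cons2[x_le /IH]] //.
exact/fecund_seq_cons2.
Qed.

Lemma fecund_alg_cost_le s : (fecund_alg s).2 <= (size s).+1 ^ 2.
Proof.
elim: s => [|x [|y s] IH] //.
by rewrite fecund_alg_cons2 exists_geE; case: fecund_alg IH => b k /= IH; lia.
Qed.

Lemma fecund_seq_iota g L : fecund_seq [seq g k | k <- iota 1 L] <-> fecund g L.
Proof.
have nth_g i : i < L -> nth 0 [seq g k | k <- iota 1 L] i = g i.+1.
  by move=> lt_iL; rewrite (nth_map 0) ?size_iota // nth_iota.
rewrite /fecund_seq size_map size_iota; split.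
- move=> fec i /andP[i_gt0 lt_iL]; have [j lt_j] := fec i.-1 ltac:(lia).
  by rewrite !nth_g ?prednK; try lia; exists j.+1; split; lia.
- move=> fec i lt_i; have [j [lt_j]] := fec i.+1 ltac:(lia).
  by exists j.-1; rewrite ?nth_g ?prednK; lia.
Qed.

Lemma observe_cost_le L M k1 k2 :
  0 < L -> 0 < M -> k1 <= L * (11 * M).+1 + 1 -> k2 <= L.+1 ^ 2 ->
  k1 + k2 + 1 <= 20 * maxn (L * M) (L * L).
Proof.
move=> L_gt0 M_gt0; rewrite mulnS mulnCA -mulnn mulSnr mulnS.
have : L <= L * M by rewrite leq_pmulr.
have : L <= L * L by rewrite leq_pmulr.
lia.
Qed.

Theorem theorem6 :
  exists K : nat,
  forall (Ent : eqType) (E : nat -> seq Ent) (C Dl R : Ent -> Ent -> bool)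
         (n L tc tD tR : nat),
    0 < L -> 0 < tc -> 0 < tD -> 0 < tR ->
    (forall k, k <= L -> uniq (E k) /\ size (E k) <= 2 ^ n) ->
    let: ((gs, b), steps) := observe_fecundity C Dl R tc tD tR E L in
    [/\ gs = [seq gen_size E C Dl R i | i <- iota 1 L],
        b <-> fecund (gen_size E C Dl R) L
      & steps <= K * maxn (L * 2 ^ (2 * n) * maxn tc (maxn tD tR)) (L * L)].
Proof.
exists 20 => Ent E C Dl R n L tc tD tR L_gt0 tc_gt0 tD_gt0 tR_gt0 sizeE.
have -> : 2 ^ (2 * n) = 2 ^ n * 2 ^ n by rewrite -expnD addnn mul2n.
rewrite /observe_fecundity; set N := 2 ^ n; set T := maxn tc (maxn tD tR).
have N_gt0 : 0 < N by rewrite expn_gt0.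
have gen_cost : (gen_sizes_alg C Dl R tc tD tR E 1 L).2 <= L * (11 * (N * N * T)).+1 + 1.
  apply: gen_sizes_alg_cost_le => k k_range.
  by apply: gen_size_alg_cost_le; rewrite ?(sizeE _ _).2 //; lia.
have := gen_sizes_alg_value C Dl R tc tD tR E 1 L.
case: gen_sizes_alg gen_cost => gs k1 /= gen_cost gsE.
have := fecund_algP gs; have := fecund_alg_cost_le gs.
case: fecund_alg => b k2 /= fec_cost fecP.
have size_gs : size gs = L by rewrite gsE size_map size_iota.
split => //; first by rewrite -fecund_seq_iota -gsE; split => /fecP.
rewrite -mulnA; apply: observe_cost_le => //; last by rewrite -size_gs.
by rewrite !muln_gt0 N_gt0; lia.
Qed.
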